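(* Let $m$ be a positive integer and $\theta \geq 2m$ a real number. Let $p_0 < p_1 < \cdots < p_{s-1}$ be prime numbers lying between $2m$ and $3m$, put $\alpha_i = 3m - p_i$ for $0 \le i \le s-1$, and $k = 6m$. For $1 \le j \le k$ define $$coef_1(j) = \begin{cases} \theta/2 - \alpha_i & \text{if } j = 3m-\alpha_i \ (= p_i) \text{ for some } 0\le i\le s-1,\\ \theta/2 + \alpha_i & \text{if } j = 2(3m-\alpha_i)\ (=2p_i) \text{ for some } 0 \le i \le s-1,\\ -k(\theta+m) & \text{otherwise.}\end{cases}$$ For each $i$, let $\{x^{\alpha_i}(n) : n \ge 0\}$ be the sequence whose first $k$ terms are $$x^{\alpha_i}(0)\cdots x^{\alpha_i}(k-1) = \underbrace{0\cdots 0}_{2\alpha_i}\,1\underbrace{0\cdots0}_{3m-\alpha_i-1}\,1\underbrace{0\cdots0}_{3m-\alpha_i-1}$$ and, for $n \ge k$, $x^{\alpha_i}(n) = \mathbf{1}\big(\sum_{j=1}^{k} coef_1(j)\, x^{\alpha_i}(n-j) - \theta\big)$. Let $\{u(n) : n \ge 0\}$ be any sequence with arbitrary initial terms $u(0)u(1)\cdots u(k-1) \in \{0,1\}^k$ and $u(n) = \mathbf{1}\big(\sum_{j=1}^{k} coef_1(j)\, u(n-j) - \theta\big)$ for $n \ge k$. Then the sequence $u$ converges either to the null sequence $000\cdots$, or to one of the sequences $\{x^{\alpha_i}(n) : n\ge 0\}$, $0 \le i \le s-1$ (i.e. its eventual cycle is that of $x^{\alpha_i}$, up to a shift of indices).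
   Context: $\mathbf{1}(v) = 0$ if $v < 0$ and $\mathbf{1}(v) = 1$ if $v \ge 0$. A $0$-$1$ sequence generated by such a recurrence is eventually periodic; ''converges to'' a sequence means that after some transient it coincides (up to a shift of indices) with the periodic part of that sequence. *)

From mathcomp Require Import all_boot all_order all_algebra.
From mathcomp Require Import reals.
Set Implicit Arguments. Unset Strict Implicit. Unset Printing Implicit Defensive.
Import Order.TTheory GRing.Theory Num.Theory.
Local Open Scope ring_scope.

Definition ind {R : realType} (v : R) : nat := if 0 <= v then 1%N else 0%N.

Definition coef1 {R : realType} (m : nat) (theta : R) (ps : seq nat) (j : nat) : R :=
  if j \in ps then theta / 2 - (3 * m - j)%:R
  else if ~~ odd j && (j./2 \in ps) then theta / 2 + (3 * m - j./2)%:R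
  else - (6 * m)%:R * (theta + m%:R).

Definition recur {R : realType} (m : nat) (theta : R) (ps : seq nat) (u : nat -> nat) : Prop :=
  forall n, (6 * m <= n)%N ->
    u n = ind (\sum_(1 <= j < (6 * m).+1) coef1 m theta ps j * (u (n - j)%N)%:R - theta).

(* initial block of x^alpha: 0^{2 alpha} 1 0^{3m-alpha-1} 1 0^{3m-alpha-1} *)
Definition xinit (m a n : nat) : nat :=
  if (n == 2 * a)%N || (n == 2 * a + (3 * m - a))%N then 1%N else 0%N.

Definition converges_to (u v : nat -> nat) : Prop :=
  exists N1 N2 : nat, forall n : nat, u (N1 + n)%N = v (N2 + n)%N.

Definition converges_to_null (u : nat -> nat) : Prop :=
  exists N : nat, forall n : nat, (N <= n)%N -> u n = 0%N.

(* A firing at time t needs its active inputs in the window (t - 6m, t) to sit exactly at lags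
   p and 2q for primes q <= p of the list: any other active lag carries the weight
   -6m(theta + m), which all positive weights together cannot compensate, and every firing
   silences the next 2m steps.  Hence, once the transient is over, the gap between consecutive
   firings is a prime of the list and the gap before it is 2q - p <= p, so gaps never decrease;
   they settle at a constant p and u fires exactly every p steps.  The sequence x^{alpha} with
   alpha = 3m - p is the same p-periodic pulse train, shifted by 2 alpha. *)

From Pilot Require Import Defs.
From mathcomp Require Import all_boot all_order all_algebra.
From mathcomp Require Import reals boolp zify lra.
Import Order.TTheory GRing.Theory Num.Theory.
Local Open Scope ring_scope.
Set Implicit Arguments. Unset Strict Implicit. Unset Printing Implicit Defensive.

Lemma dvdn_lt3_cases p k : (0 < p)%N -> (k < 3 * p)%N -> (p %| k)%N ->
  [\/ k = 0%N, k = p | k = (2 * p)%N].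
Proof.
move=> p0 kp /dvdnP[c ek]; subst k.
have : (c < 3)%N by rewrite -(ltn_pmul2r p0).
by case: c {kp} => [|[|[|//]]] _; [constructor 1 | constructor 2 | constructor 3]; lia.
Qed.

Lemma ind_subr_ge (R : realType) (v w : R) : w <= v -> ind (v - w) = 1%N.
Proof. by rewrite /ind subr_ge0 => ->. Qed.

Lemma ind_subr_lt (R : realType) (v w : R) : v < w -> ind (v - w) = 0%N.
Proof. by rewrite /ind subr_ge0 leNgt => ->. Qed.

Lemma first_one (v : nat -> nat) (lo hi : nat) : (forall n, (v n <= 1)%N) ->
  (forall j, (lo < j <= hi)%N -> v j = 0%N) \/
  exists d, [/\ (lo < d <= hi)%N, v d = 1%N & forall j, (lo < j < d)%N -> v j = 0%N].
Proof.
move=> v01; have v0 j : v j != 1%N -> v j = 0%N by case: (v j) (v01 j) => [|[|]].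
case: (pselect (exists j, (lo < j <= hi)%N && (v j == 1%N))) => [ex|none]; [right | left].
  case: (ex_minnP ex) => d /andP[hd /eqP vd] dmin; exists d; split=> // j hj.
  by apply: v0; apply/negP => /eqP vj; have := dmin j; rewrite vj eqxx andbT; lia.
by move=> j hj; apply: v0; apply/negP => /eqP vj; apply: none; exists j; rewrite hj vj.
Qed.

Lemma indicator_cons (v : nat -> nat) (lo hi d : nat) (s : seq nat) :
  (lo < d <= hi)%N -> v d = 1%N -> (forall j, (lo < j < d)%N -> v j = 0%N) ->
  all (fun k => d < k)%N s -> (forall j, (d < j <= hi)%N -> v j = (j \in s) :> nat) ->
  forall j, (lo < j <= hi)%N -> v j = (j \in d :: s) :> nat.
Proof.
move=> hd vd before /allP s_gt after j hj; rewrite inE.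
case: (ltngtP j d) => [jd|dj|->]; last by rewrite vd.
  by rewrite before ?(ltn_eqF jd) //=; [case: (boolP (j \in s)) => // /s_gt | lia]; lia.
by rewrite after ?(gtn_eqF dj) //; lia.
Qed.

Definition window_sum (R : realType) (m : nat) (theta : R) (ps : seq nat)
    (v : nat -> nat) (t : nat) : R :=
  \sum_(1 <= j < (6 * m)%N.+1) Defs.coef1 m theta ps j * (v (t - j)%N)%:R.

Lemma window_sum_indicator (R : realType) m (theta : R) ps (v : nat -> nat) t (s : seq nat) :
  uniq s -> all (fun j => 0 < j <= 6 * m)%N s ->
  (forall j, (0 < j <= 6 * m)%N -> v (t - j)%N = (j \in s) :> nat) ->
  window_sum m theta ps v t = \sum_(j <- s) Defs.coef1 m theta ps j.
Proof.
move=> s_uniq /allP s_window vs.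
rewrite /window_sum (eq_big_seq (fun j => if j \in s then Defs.coef1 m theta ps j else 0)).
  rewrite -big_mkcond -big_filter; apply/perm_big/uniq_perm => [||j].
  - by rewrite filter_uniq ?iota_uniq.
  - done.
  by rewrite mem_filter mem_index_iota; case: (boolP (j \in s)) => // /s_window.
move=> j; rewrite mem_index_iota => hj; rewrite vs; last lia.
by case: (j \in s); rewrite ?mulr1 ?mulr0.
Qed.

Definition excitatory (ps : seq nat) (j : nat) : bool :=
  (j \in ps) || (~~ odd j && (j./2 \in ps)).

(* Closed form of the paper's x^{alpha} for alpha = 3m - p. *)
Definition pulse_train (m p n : nat) : bool :=
  (2 * (3 * m - p) <= n)%N && (p %| n - 2 * (3 * m - p))%N.

Lemma recur_le1 (R : realType) m (theta : R) ps (u : nat -> nat) :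
  (forall n, (n < 6 * m)%N -> (u n <= 1)%N) -> recur m theta ps u ->
  forall n, (u n <= 1)%N.
Proof.
move=> u0 urec n; case: (ltnP n (6 * m)) => hn; first exact: u0.
by rewrite urec // /ind; case: ifP.
Qed.

Lemma recur_eq (R : realType) m (theta : R) ps (v w : nat -> nat) :
  recur m theta ps v -> recur m theta ps w ->
  (forall n, (n < 6 * m)%N -> v n = w n) -> v =1 w.
Proof.
move=> vrec wrec vw; elim/ltn_ind => n IH.
case: (ltnP n (6 * m)) => hn; first exact: vw.
rewrite vrec // wrec //; congr (ind (_ - _)).
by apply: eq_big_nat => j hj; rewrite IH //; lia.
Qed.

Section Network.

Variables (R : realType) (m : nat) (theta : R) (ps : seq nat).
Hypothesis ps_range : all (fun p => 2 * m < p < 3 * m)%N ps.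

Lemma ps_bounds p : p \in ps -> (2 * m < p < 3 * m)%N.
Proof. by move: p; apply/allP. Qed.

Lemma excitatoryP j :
  excitatory ps j -> (j \in ps) \/ exists2 q, q \in ps & j = (2 * q)%N.
Proof.
case/orP=> [|/andP[odd_j half_j]]; [by left | right; exists j./2 => //].
by have := odd_double_half j; rewrite (negbTE odd_j) -mul2n.
Qed.

Lemma excitatory_gt j : excitatory ps j -> (2 * m < j)%N.
Proof.
by case/excitatoryP=> [/ps_bounds | [q /ps_bounds]]; lia.
Qed.

Lemma excitatory_large j : (3 * m <= j)%N -> excitatory ps j ->
  exists2 q, q \in ps & j = (2 * q)%N.
Proof. by move=> hj /excitatoryP[/ps_bounds|//]; lia. Qed.

Lemma excitatory_small j : (j <= 4 * m)%N -> excitatory ps j -> j \in ps.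
Proof. by move=> hj /excitatoryP[//|[q /ps_bounds]]; lia. Qed.

Lemma coef1_prime p : p \in ps -> Defs.coef1 m theta ps p = theta / 2 - (3 * m - p)%:R.
Proof. by rewrite /Defs.coef1 => ->. Qed.

Lemma coef1_double q : q \in ps -> Defs.coef1 m theta ps (2 * q) = theta / 2 + (3 * m - q)%:R.
Proof.
move=> qps; have /ps_bounds hq := qps.
have q2 : (2 * q \in ps) = false by apply/negP => /ps_bounds; lia.
by rewrite /Defs.coef1 q2 mul2n odd_double doubleK qps.
Qed.

Lemma coef1_inhibitory j : ~~ excitatory ps j ->
  Defs.coef1 m theta ps j = - (6 * m)%:R * (theta + m%:R).
Proof. by rewrite /excitatory negb_or => /andP[/negbTE h1 /negbTE h2]; rewrite /Defs.coef1 h1 h2. Qed.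

Hypothesis m_gt0 : (0 < m)%N.
Hypothesis theta_ge : (2 * m)%:R <= theta.

Lemma theta_gt0 : 0 < theta.
Proof. by apply: lt_le_trans theta_ge; rewrite ltr0n; lia. Qed.

Lemma m_le_half_theta : m%:R <= theta / 2.
Proof. by move: theta_ge; rewrite natrM; lra. Qed.

Lemma coef1_lt j : Defs.coef1 m theta ps j < theta / 2 + m%:R.
Proof.
have m0 : 0 < m%:R :> R by rewrite ltr0n.
have theta0 := theta_gt0.
rewrite /Defs.coef1; case: ifP => _; first by have : 0 <= (3 * m - j)%:R :> R by []; lra.
case: ifP => [/andP[_ /ps_bounds hj]|_]; first by rewrite ltrD2l ltr_nat; lia.
have : 0 <= (6 * m)%:R * (theta + m%:R) :> R by rewrite mulr_ge0 //; lra.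
lra.
Qed.

Lemma coef1_lt_theta j : Defs.coef1 m theta ps j < theta.
Proof. by have := coef1_lt j; have := m_le_half_theta; lra. Qed.

(* One inhibitory input outweighs all excitatory ones: 6m (theta/2 + m) <= 6m (theta + m). *)
Lemma window_sum_inhibitory_lt (v : nat -> nat) t a :
  (forall j, (0 < j <= 6 * m)%N -> (v (t - j) <= 1)%N) ->
  (0 < a <= 6 * m)%N -> ~~ excitatory ps a -> v (t - a)%N = 1%N ->
  window_sum m theta ps v t < theta.
Proof.
move=> v01 ha a_inh va.
have theta0 := theta_gt0; set B := theta / 2 + m%:R.
pose F j := Defs.coef1 m theta ps j * (v (t - j)%N)%:R.
have FB j : (0 < j <= 6 * m)%N -> F j <= B.
  move=> hj; rewrite /F; case: (v (t - j)%N) (v01 j hj) => [|[|//]] _.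
    by rewrite mulr0 /B; have : 0 <= m%:R :> R by []; lra.
  by rewrite mulr1 ltW ?coef1_lt.
have a_in : a \in index_iota 1 (6 * m).+1 by rewrite mem_index_iota; lia.
have rest : \sum_(j <- index_iota 1 (6 * m).+1 | j != a) F j <= (6 * m)%:R * B.
  apply: le_trans (_ : \sum_(1 <= j < (6 * m).+1) B <= _); last first.
    by rewrite sumr_const_nat subn1 /= mulr_natl.
  rewrite (bigD1_seq a a_in (iota_uniq _ _)) /= -[X in X <= _]add0r lerD //.
    by rewrite /B; have : 0 <= m%:R :> R by []; lra.
  by rewrite big_seq_cond [X in _ <= X]big_seq_cond ler_sum // => j /andP[]; rewrite mem_index_iota => /FB.
rewrite /window_sum (bigD1_seq a a_in (iota_uniq _ _)) /= -/F /F va mulr1 coef1_inhibitory //.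
have : 0 <= (6 * m)%:R :> R by [].
move: rest; rewrite /B; nra.
Qed.

Lemma pulse_train_shift p n : pulse_train m p (2 * (3 * m - p) + n) = (p %| n)%N.
Proof. by rewrite /pulse_train leq_addr addKn. Qed.

Lemma xinit_pulse_train p n : p \in ps -> (n < 6 * m)%N ->
  xinit m (3 * m - p) n = pulse_train m p n.
Proof.
move=> /ps_bounds hp hn; rewrite /xinit /pulse_train.
rewrite (_ : 3 * m - (3 * m - p) = p)%N; last lia.
case: (leqP (2 * (3 * m - p)) n) => [le | lt] /=.
  suff -> : ((n == 2 * (3 * m - p)) || (n == 2 * (3 * m - p) + p) = (p %| n - 2 * (3 * m - p)))%N.
    by [].
  apply/orP/idP => [[] /eqP -> | dvd]; first by rewrite subnn dvdn0.
    by rewrite addKn dvdnn.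
  have p0 : (0 < p)%N by lia.
  have d3p : (n - 2 * (3 * m - p) < 3 * p)%N by lia.
  by case: (dvdn_lt3_cases p0 d3p dvd) => e; [left | right | ]; try apply/eqP; lia.
by rewrite ifF //; apply/negbTE/norP; split; apply/eqP; lia.
Qed.

Lemma pulse_train_window p n j : p \in ps -> (6 * m <= n)%N -> (0 < j <= 6 * m)%N ->
  pulse_train m p (n - j) =
    (j <= n - 2 * (3 * m - p))%N && (p %| n - 2 * (3 * m - p) - j)%N.
Proof.
move=> /ps_bounds hp hn hj; rewrite /pulse_train.
by congr andb; [apply/idP/idP | congr dvdn]; lia.
Qed.

Lemma window_sum_pulse_train_on_beat p n : p \in ps -> (6 * m <= n)%N ->
  (p %| n - 2 * (3 * m - p))%N -> window_sum m theta ps (pulse_train m p) n = theta.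
Proof.
move=> p_in hn dvd; have /ps_bounds hp := p_in.
rewrite (@window_sum_indicator R m theta ps (pulse_train m p) n [:: p; 2 * p]%N) /=.
- by rewrite big_cons big_seq1 coef1_prime // coef1_double //; lra.
- by rewrite inE; lia.
- lia.
move=> j hj; rewrite pulse_train_window // !inE; congr nat_of_bool.
case: (leqP j (n - 2 * (3 * m - p))) => jd /=; last by apply/esym/norP; split; apply/eqP; lia.
rewrite dvdn_subr //; apply/idP/orP => [jp | [] /eqP ->]; rewrite ?dvdnn ?dvdn_mull //.
have p0 : (0 < p)%N by lia.
have j3p : (j < 3 * p)%N by lia.
by case: (dvdn_lt3_cases p0 j3p jp) => e; [lia | left | right]; rewrite e.
Qed.

(* Off the beat, the active inputs sit at [r] and [r + p] with [r = d %% p]; for the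
   sum to reach [theta] both must be excitatory, forcing [r + p = 2 q] with [r < q]. *)
Lemma window_sum_pulse_train_off_beat p n : p \in ps -> (6 * m <= n)%N ->
  ~~ (p %| n - 2 * (3 * m - p))%N -> window_sum m theta ps (pulse_train m p) n < theta.
Proof.
move=> p_in hn; have /ps_bounds hp := p_in.
set d := (n - 2 * (3 * m - p))%N; rewrite /dvdn -lt0n => r0; set r := (d %% p)%N in r0.
have rp : (r < p)%N by rewrite ltn_pmod; lia.
have inputs j : (0 < j <= 6 * m)%N -> pulse_train m p (n - j) = (j <= d)%N && (j %% p == r)%N.
  by move=> hj; rewrite pulse_train_window //; apply/andb_id2l => jd; rewrite -eqn_mod_dvd // eq_sym.
have in_r : pulse_train m p (n - r) by rewrite inputs ?modn_small //; lia.
have in_rp : pulse_train m p (n - (r + p)) by rewrite inputs ?modnDr ?modn_small //; lia.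
have v01 j : (0 < j <= 6 * m)%N -> (pulse_train m p (n - j) <= 1)%N by rewrite leq_b1.
have [r_exc | r_inh] := boolP (excitatory ps r); last first.
  by apply: (window_sum_inhibitory_lt v01 _ r_inh); rewrite ?in_r //; lia.
have [rp_exc | rp_inh] := boolP (excitatory ps (r + p)); last first.
  by apply: (window_sum_inhibitory_lt v01 _ rp_inh); rewrite ?in_rp //; lia.
have r_small : (r <= 4 * m)%N by lia.
have r_in := excitatory_small r_small r_exc.
have /ps_bounds hr := r_in.
have rp_large : (3 * m <= r + p)%N by lia.
have [q q_in erp] := excitatory_large rp_large rp_exc.
have /ps_bounds hq := q_in.
rewrite (@window_sum_indicator R m theta ps (pulse_train m p) n [:: r; 2 * q]%N) /=.
- rewrite big_cons big_seq1 coef1_prime // coef1_double //.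
  have : ((3 * m - q)%N%:R < (3 * m - r)%N%:R :> R) by rewrite ltr_nat; lia.
  lra.
- by rewrite inE; lia.
- lia.
move=> j hj; rewrite inputs // !inE; congr nat_of_bool.
apply/andP/orP => [[jd /eqP jr] | [] /eqP ->].
- move: (divn_eq j p); rewrite jr; case: (j %/ p)%N => [|[|k]]; rewrite ?mulSn => ej.
  + by left; apply/eqP; lia.
  + by right; apply/eqP; lia.
  + lia.
- by split; [lia | rewrite modn_small].
- by split; [lia | rewrite -erp modnDr modn_small].
Qed.

Lemma pulse_train_recur p : p \in ps -> recur m theta ps (pulse_train m p).
Proof.
move=> p_in n hn; have /ps_bounds hp := p_in.
rewrite -/(window_sum m theta ps (pulse_train m p) n).
have [dvd | ndvd] := boolP (p %| n - 2 * (3 * m - p))%N.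
  rewrite ind_subr_ge ?window_sum_pulse_train_on_beat // /pulse_train dvd andbT.
  by have -> : (2 * (3 * m - p) <= n)%N by lia.
by rewrite ind_subr_lt ?window_sum_pulse_train_off_beat // /pulse_train (negbTE ndvd) andbF.
Qed.

Lemma pulse_train_unique p (y : nat -> nat) : p \in ps ->
  (forall n, (n < 6 * m)%N -> y n = xinit m (3 * m - p) n) -> recur m theta ps y ->
  y =1 pulse_train m p.
Proof.
move=> p_in y_init y_rec; apply: recur_eq y_rec (pulse_train_recur p_in) _ => n hn.
by rewrite y_init // xinit_pulse_train.
Qed.

Section Trajectory.

Variable u : nat -> nat.
Hypothesis u_le1 : forall n, (u n <= 1)%N.
Hypothesis u_rec : recur m theta ps u.

Lemma u_eq0 n : u n != 1%N -> u n = 0%N.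
Proof. by case: (u n) (u_le1 n) => [|[|]]. Qed.

Lemma firing_window_sum_ge t :
  (6 * m <= t)%N -> u t = 1%N -> theta <= window_sum m theta ps u t.
Proof. by move=> ht; rewrite u_rec // /ind; case: ifP => // + _; rewrite subr_ge0. Qed.

Lemma firing_input_excitatory t j : (6 * m <= t)%N -> u t = 1%N ->
  (0 < j <= 6 * m)%N -> u (t - j)%N = 1%N -> excitatory ps j.
Proof.
move=> ht ut hj uj; apply/negPn/negP => inh.
have := firing_window_sum_ge ht ut.
by rewrite leNgt (window_sum_inhibitory_lt _ hj inh uj) // => i _.
Qed.

Lemma refractory s j : (6 * m <= s)%N -> u s = 1%N ->
  (1 <= j <= 2 * m)%N -> u (s - j)%N = 0%N.
Proof.
move=> hs us hj; apply/u_eq0/negP => /eqP usj.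
have hj6 : (0 < j <= 6 * m)%N by lia.
by have := excitatory_gt (firing_input_excitatory hs us hj6 usj); lia.
Qed.

Lemma window_silent_after_input t d j : (12 * m <= t)%N ->
  (0 < d <= 6 * m)%N -> u (t - d)%N = 1%N -> (d < j <= d + 2 * m)%N ->
  u (t - j)%N = 0%N.
Proof.
move=> ht hd ud hj; have -> : (t - j = t - d - (j - d))%N by lia.
by apply: refractory ud _; lia.
Qed.

Lemma firing_not_single_input t d : (6 * m <= t)%N -> u t = 1%N -> (0 < d <= 6 * m)%N ->
  ~ (forall j, (0 < j <= 6 * m)%N -> u (t - j)%N = (j \in [:: d]) :> nat).
Proof.
move=> ht ut hd hu; have := firing_window_sum_ge ht ut.
rewrite (@window_sum_indicator R m theta ps u t [:: d] _ _ hu) /= ?hd // big_seq1.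
by have := coef1_lt_theta d; lra.
Qed.

(* After an input at [d] the refractory period silences [(d, d + 2m]], and every input lies in
   [(2m, 6m]], so there are at most two inputs; one alone is subthreshold, and two must be a
   prime [p] followed by a double prime [2q], with [theta + (3m - q) - (3m - p) >= theta]. *)
Lemma firing_window t : (12 * m <= t)%N -> u t = 1%N ->
  exists p q, [/\ p \in ps, q \in ps, (q <= p)%N &
    forall j, (0 < j <= 6 * m)%N -> u (t - j)%N = (j \in [:: p; 2 * q]%N) :> nat].
Proof.
move=> ht ut; have ht6 : (6 * m <= t)%N by lia.
have sum_ge := firing_window_sum_ge ht6 ut.
have inputs lo := @first_one (fun j => u (t - j)%N) lo (6 * m) (fun _ => u_le1 _).
have lone := firing_not_single_input ht6 ut.
case: (inputs 0%N) => [silent | [p [hp up before_p]]].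
  rewrite (@window_sum_indicator R m theta ps u t [::]) ?big_nil // in sum_ge.
  by have := theta_gt0; lra.
have p_exc := firing_input_excitatory ht6 ut hp up.
have after_p j : (p < j <= p + 2 * m)%N -> u (t - j)%N = 0%N.
  by move=> hj; apply: window_silent_after_input ht hp up hj.
have p_in : p \in ps.
  case/excitatoryP: p_exc => // -[q' /ps_bounds hq' ep]; case: (lone p hp).
  by apply: (@indicator_cons (fun j => u (t - j)%N)) => // j hj; rewrite after_p //; lia.
have /ps_bounds hp_range := p_in.
case: (inputs p) => [silent | [d [hd ud between]]].
  by case: (lone p hp); apply: (@indicator_cons (fun j => u (t - j)%N)) => // j /silent ->.
have hpd : (p + 2 * m < d)%N by rewrite ltnNge; apply/negP => dp; rewrite after_p in ud; lia.
have d_window : (0 < d <= 6 * m)%N by lia.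
have d_large : (3 * m <= d)%N by lia.
have [q q_in ed] := excitatory_large d_large (firing_input_excitatory ht6 ut d_window ud).
have /ps_bounds hq_range := q_in; subst d.
have after_d j : (2 * q < j <= 6 * m)%N -> u (t - j)%N = 0%N.
  by move=> hj; apply: window_silent_after_input ht _ ud _; lia.
have window : forall j, (0 < j <= 6 * m)%N -> u (t - j)%N = (j \in [:: p; 2 * q]%N) :> nat.
  apply: (@indicator_cons (fun j => u (t - j)%N)) => //=; first by rewrite andbT; lia.
  by apply: (@indicator_cons (fun j => u (t - j)%N)) => //; lia.
exists p, q; split => //.
move: sum_ge; rewrite (@window_sum_indicator R m theta ps u t [:: p; 2 * q]%N _ _ window) /=; last by lia.
  rewrite big_cons big_seq1 coef1_prime // coef1_double // => sum_ge.
  have : ((3 * m - p)%N%:R <= (3 * m - q)%N%:R :> R) by lra.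
  by rewrite ler_nat; lia.
by rewrite inE; lia.
Qed.

Definition gap_before (t g : nat) : Prop :=
  [/\ u t = 1%N, g \in ps, u (t - g)%N = 1%N & forall j, (0 < j < g)%N -> u (t - j)%N = 0%N].

Lemma gap_before_exists t : (12 * m <= t)%N -> u t = 1%N -> exists g, gap_before t g.
Proof.
move=> ht ut; have [p [q [p_in q_in _ window]]] := firing_window ht ut.
have /ps_bounds hp := p_in; have /ps_bounds hq := q_in.
exists p; split=> //; first by rewrite window ?inE ?eqxx //; lia.
by move=> j hj; rewrite window ?inE; [case: eqP; case: eqP => //; lia | lia].
Qed.

(* The previous gap is [2 q - p] with [q <= p], so gaps never decrease. *)
Lemma gap_before_mono t g1 g : (12 * m <= t)%N ->
  gap_before t g1 -> gap_before (t - g1)%N g -> (g <= g1)%N.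
Proof.
move=> ht [ut g1_in ug1 before] [_ g_in ug _].
have [p [q [p_in q_in qp window]]] := firing_window ht ut.
move: (ps_bounds g1_in) (ps_bounds g_in) (ps_bounds p_in) (ps_bounds q_in) => ? ? ? ?.
have : (0 < u (t - g1)%N)%N by rewrite ug1.
rewrite window ?lt0b ?inE; last lia.
have : (0 < u (t - (g1 + g))%N)%N by rewrite subnDA ug.
rewrite window ?lt0b ?inE; last lia.
by case/orP=> /eqP ? /orP[] /eqP ?; lia.
Qed.

Lemma gap_before_next t P : (12 * m <= t)%N -> gap_before t P ->
  (forall t' g, (12 * m <= t')%N -> gap_before t' g -> (g <= P)%N) ->
  (exists n, (t < n)%N && (u n == 1%N)) ->
  gap_before (t + P) P /\ forall i, (0 < i < P)%N -> u (t + i)%N = 0%N.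
Proof.
move=> ht gapP Pmax fires; have [ut P_in _ _] := gapP.
case: (ex_minnP fires) => t1 /andP[tt1 /eqP ut1] t1_min.
have ht1 : (12 * m <= t1)%N by lia.
have [g1 gap1] := gap_before_exists ht1 ut1.
have [_ g1_in ug1 before1] := gap1; have /ps_bounds hg1 := g1_in.
have back : (t1 - g1)%N = t.
  case: (ltngtP (t1 - g1) t) => // [lt | gt].
    by have := before1 (t1 - t)%N; rewrite (_ : t1 - (t1 - t) = t)%N ?ut; lia.
  by have := t1_min (t1 - g1)%N; rewrite ug1 eqxx andbT; lia.
have g1P : (g1 <= P)%N by apply: Pmax gap1.
have Pg1 : (P <= g1)%N by apply: gap_before_mono ht1 gap1 _; rewrite back.
have -> : (t + P = t1)%N by lia.
have -> : P = g1 by lia.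
split=> // i hi; apply/u_eq0/negP => /eqP ui.
by have := t1_min (t + i)%N; rewrite ui eqxx andbT; lia.
Qed.

Lemma gap_before_periodic ts P : (0 < P)%N ->
  (forall t, (ts <= t)%N -> gap_before t P ->
     gap_before (t + P) P /\ forall i, (0 < i < P)%N -> u (t + i)%N = 0%N) ->
  gap_before ts P -> forall n, u (ts + n)%N = (P %| n)%N :> nat.
Proof.
move=> P0 next gap0 n.
have gapk k : gap_before (ts + k * P) P.
  elim: k => [|k IHk]; first by rewrite addn0.
  by rewrite mulSn addnCA addnC; case: (next _ (leq_addr _ _) IHk).
rewrite (divn_eq n P) addnA dvdn_addr ?dvdn_mull //.
case: (posnP (n %% P)%N) => [->|ip]; first by rewrite addn0 dvdn0; case: (gapk (n %/ P)%N).
have [_ zeros] := next _ (leq_addr _ _) (gapk (n %/ P)%N).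
by rewrite zeros ?ip ?ltn_pmod // /dvdn modn_small ?ltn_pmod // eqn0Ngt ip.
Qed.

Lemma eventually_periodic : ~ converges_to_null u ->
  exists2 P, P \in ps & exists ts, forall n, u (ts + n)%N = (P %| n)%N :> nat.
Proof.
move=> not_null.
have fires N : exists n, (N < n)%N && (u n == 1%N).
  apply: contrapT => silent; apply: not_null; exists N.+1 => n hn.
  by apply/u_eq0/negP => un; apply: silent; exists n; rewrite un andbT.
pose occurs g := `[< exists2 t, (12 * m <= t)%N & gap_before t g >].
have occurs_ex : exists g, occurs g.
  have [t /andP[ht /eqP ut]] := fires (12 * m)%N.
  have [g gap] := gap_before_exists (ltnW ht) ut.
  by exists g; apply/asboolP; exists t => //; apply: ltnW.
have occurs_le g : occurs g -> (g <= 3 * m)%N.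
  by move=> /asboolP[t _ [_ /ps_bounds]]; lia.
case: (ex_maxnP occurs_ex occurs_le) => P /asboolP[ts hts gapP] Pmax.
have [_ P_in _ _] := gapP; have /ps_bounds hP := P_in.
exists P => //; exists ts; apply: gap_before_periodic gapP; first lia.
move=> t tts gapt; apply: gap_before_next gapt _ (fires t); first lia.
by move=> t' g ht' gap'; apply: Pmax; apply/asboolP; exists t'.
Qed.

End Trajectory.

End Network.

Theorem proposition5 (R : realType) (m : nat) (theta : R) (ps : seq nat)
    (x : nat -> nat -> nat) (u : nat -> nat) :
  (0 < m)%N ->
  (2 * m)%:R <= theta ->
  sorted ltn ps ->
  all prime ps ->
  all (fun p => (2 * m < p < 3 * m)%N) ps ->
  (forall p, p \in ps ->
     (forall n, (n < 6 * m)%N -> x p n = xinit m (3 * m - p) n) /\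
     recur m theta ps (x p)) ->
  (forall n, (n < 6 * m)%N -> (u n <= 1)%N) ->
  recur m theta ps u ->
  converges_to_null u \/ exists2 p, p \in ps & converges_to u (x p).
Proof.
move=> m_gt0 theta_ge _ _ ps_range x_spec u_init u_rec.
have u_le1 := recur_le1 u_init u_rec.
have [null | not_null] := pselect (converges_to_null u); [by left | right].
have [p p_in [ts u_periodic]] := eventually_periodic ps_range m_gt0 theta_ge u_le1 u_rec not_null.
have [x_init x_rec] := x_spec p p_in.
exists p; first exact: p_in.
exists ts, (2 * (3 * m - p))%N => n.
by rewrite u_periodic (pulse_train_unique ps_range m_gt0 theta_ge p_in x_init x_rec) pulse_train_shift.
Qed.
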